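(* Let $A$ be a formula of $\mathbf{L_1}$. If some normal tableau for $A$ is closed, then no normal tableau for $A$ has a branch ending with a Hintikka formula; in particular every completed normal tableau for $A$ is closed.
   Context: Formulas of $\mathbf{L_1}$: built from atomic formulas $\epsilon ab$ ($a,b$ name variables, possibly equal) with connectives $\vee,\sim$. Disjunctions may be associated in any way. Positive/negative parts (occurrences): $A$ is a positive part of $A$; if $B\vee C$ is a positive part then $B,C$ are positive parts; if $\sim B$ is a positive part then $B$ is a negative part; if $\sim B$ is a negative part then $B$ is a positive part. $F[B_+]$ ($G[B_-]$) denotes a formula with a specified occurrence of $B$ as positive (negative) part; $F[B_+,C_-]$ etc. denote specified non-overlapping occurrences. Tableaux: reduction rules ($\vee_-$) $G[B\vee C_-]$ $\mapsto$ two branches $G[B\vee C_-]\vee\sim B$, $G[B\vee C_-]\vee\sim C$; ($\epsilon_1$) $G[\epsilon ab_-]\mapsto G[\epsilon ab_-]\vee\sim\epsilon aa$; ($\epsilon_2$) $G[\epsilon ab_-,\epsilon bc_-]\mapsto G[\epsilon ab_-,\epsilon bc_-]\vee\sim\epsilon ac$; ($\epsilon_{3b}$) $G[\epsilon ab_-,\epsilon bb_-]\mapsto G[\epsilon ab_-,\epsilon bb_-]\vee\sim\epsilon ba$. A tableau for $A$ is a finite tree with root $A$ whose non-leaf nodes have as children the result of applying one rule. A branch is closed if its last formula has the form $F[B_+,B_-]$; a tableau is closed if all branches are. A tableau is normal if each rule application is made only to a formula not of the form $F[B_+,B_-]$ and only when the formula appended after $\sim$ (i.e. $B$, $C$, $\epsilon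 aa$, $\epsilon ac$ or $\epsilon ba$ respectively) does not already occur as a negative part of the formula being reduced. A normal tableau is completed if no further normal rule application is possible at the end of any branch. Hintikka formula: a formula $H$ such that (1) $H$ is not of the form $F[B_+,B_-]$; (2) if $B\vee C$ is a negative part of $H$ then $B$ or $C$ is; (3) if $\epsilon ab$ is a negative part then so is $\epsilon aa$; (4) if $\epsilon ab,\epsilon bc$ are negative parts then so is $\epsilon ac$; (5) if $\epsilon ab,\epsilon bb$ are negative parts then so is $\epsilon ba$. *)

From Stdlib Require Import List.
Import ListNotations.

(** Formulas of L1; name variables are natural numbers. *)
Inductive formula : Type :=
| Eps : nat -> nat -> formula
| Or  : formula -> formula -> formula
| Neg : formula -> formula.

(** Positions (occurrences) of subformulas: paths from the root. *)
Inductive dir : Type := DL | DR | DN.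
Definition position := list dir.

(** [part s0 A p s X]: in formula A, taken itself with polarity s0
    (true = positive, false = negative), the occurrence at position p is the
    formula X and it is a part of polarity s.  Following the definition:
    A is a positive part of A; the disjuncts of a POSITIVE disjunction are
    positive parts; the argument of a negation has the opposite polarity. *)
Inductive part : bool -> formula -> position -> bool -> formula -> Prop :=
| part_here : forall s A, part s A [] s A
| part_orl : forall B C p s X, part true B p s X -> part true (Or B C) (DL :: p) s X
| part_orr : forall B C p s X, part true C p s X -> part true (Or B C) (DR :: p) s X
| part_neg : forall s0 B p s X, part (negb s0) B p s X -> part s0 (Neg B) (DN :: p) s X.

Definition pos_part_at (F : formula) (p : position) (X : formula) : Prop :=
  part true F p true X.
Definition neg_part_at (F : formula) (p : position) (X : formula) : Prop :=
  part true F p false X.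

Definition neg_part (F X : formula) : Prop := exists p, neg_part_at F p X.

Definition prefix (p q : position) : Prop := exists r, q = p ++ r.
Definition nonoverlap (p q : position) : Prop := ~ prefix p q /\ ~ prefix q p.

Definition closed_form (F : formula) : Prop :=
  exists B p q, nonoverlap p q /\ pos_part_at F p B /\ neg_part_at F q B.

(** Normal applications of the one-branch rules (eps1), (eps2), (eps3b):
    [nstep1 G G'] means G' results from G by a normal application. *)
Definition nstep1 (G G' : formula) : Prop :=
  ~ closed_form G /\
  (
    (exists a b, neg_part G (Eps a b) /\ ~ neg_part G (Eps a a) /\
                 G' = Or G (Neg (Eps a a)))
    \/
    (exists a b c p q, nonoverlap p q /\ neg_part_at G p (Eps a b) /\
                 neg_part_at G q (Eps b c) /\ ~ neg_part G (Eps a c) /\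
                 G' = Or G (Neg (Eps a c)))
    \/
    (exists a b p q, nonoverlap p q /\ neg_part_at G p (Eps a b) /\
                 neg_part_at G q (Eps b b) /\ ~ neg_part G (Eps b a) /\
                 G' = Or G (Neg (Eps b a)))).

Definition nstep2 (G G1 G2 : formula) : Prop :=
  ~ closed_form G /\
  exists B C, neg_part G (Or B C) /\ ~ neg_part G B /\ ~ neg_part G C /\
              G1 = Or G (Neg B) /\ G2 = Or G (Neg C).

Inductive tab : Type :=
| Leaf : formula -> tab
| Un   : formula -> tab -> tab
| Bin  : formula -> tab -> tab -> tab.

Definition root (t : tab) : formula :=
  match t with Leaf F => F | Un F _ => F | Bin F _ _ => F end.

Fixpoint normal_tab (t : tab) : Prop :=
  match t with
  | Leaf _ => True
  | Un F t1 => nstep1 F (root t1) /\ normal_tab t1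
  | Bin F t1 t2 => nstep2 F (root t1) (root t2) /\ normal_tab t1 /\ normal_tab t2
  end.

Definition normal_tableau_for (A : formula) (t : tab) : Prop :=
  root t = A /\ normal_tab t.

Fixpoint leaves (t : tab) : list formula :=
  match t with
  | Leaf F => [F]
  | Un _ t1 => leaves t1
  | Bin _ t1 t2 => leaves t1 ++ leaves t2
  end.

Definition closed_tab (t : tab) : Prop :=
  forall F, In F (leaves t) -> closed_form F.

Definition completed (t : tab) : Prop :=
  forall F, In F (leaves t) ->
    (~ exists G', nstep1 F G') /\ (~ exists G1 G2, nstep2 F G1 G2).

Definition hintikka (H : formula) : Prop :=
  ~ closed_form H /\
  (forall B C, neg_part H (Or B C) -> neg_part H B \/ neg_part H C) /\
  (forall a b, neg_part H (Eps a b) -> neg_part H (Eps a a)) /\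
  (forall a b c, neg_part H (Eps a b) -> neg_part H (Eps b c) -> neg_part H (Eps a c)) /\
  (forall a b, neg_part H (Eps a b) -> neg_part H (Eps b b) -> neg_part H (Eps b a)).

From Stdlib Require Import List Classical Lia.
Import ListNotations.

(** The argument is semantic.  A valuation [v : nat -> nat
    -> Prop] interprets [eps a b]; it is ontological when it validates the
    three epsilon rules.  Then:
    - every rule is sound: if all children of a node are true under an
      ontological valuation, so is the node; closed formulas are valid, hence
      the root of a closed tableau is true under every ontological valuation;
    - every child has the form [G \/ X] for its parent [G], so a valuation
      falsifying the last formula of a branch falsifies the root;
    - a Hintikka formula [H] is falsified by the ontological valuation
      "[eps a b] holds iff [eps a b] is a negative part of [H]".
    So a Hintikka leaf in a tableau for [A] falsifies [A], which the closed
    tableau shows valid.  Finally, an unclosed leaf of a completed tableau is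
    a Hintikka formula, which gives the second half of the theorem. *)

Fixpoint eval (v : nat -> nat -> Prop) (F : formula) : Prop :=
  match F with
  | Eps a b => v a b
  | Or B C => eval v B \/ eval v C
  | Neg B => ~ eval v B
  end.

Definition ontological (v : nat -> nat -> Prop) : Prop :=
  (forall a b, v a b -> v a a) /\
  (forall a b c, v a b -> v b c -> v a c) /\
  (forall a b, v a b -> v b b -> v b a).

Definition holds (s : bool) (v : nat -> nat -> Prop) (X : formula) : Prop :=
  if s then eval v X else ~ eval v X.

Lemma part_holds v s0 A p s X :
  part s0 A p s X -> holds s v X -> holds s0 v A.
Proof.
  intros Hp; induction Hp; unfold holds in *; simpl; intro HX.
  - exact HX.
  - left; auto.
  - right; auto.
  - specialize (IHHp HX); destruct s0; simpl in *; tauto.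
Qed.

Lemma neg_part_true v F p X : ~ eval v F -> neg_part_at F p X -> eval v X.
Proof.
  intros HF Hp; apply NNPP; intro HX.
  exact (HF (part_holds v _ _ _ _ _ Hp HX)).
Qed.

Lemma closed_form_valid v F : closed_form F -> eval v F.
Proof.
  intros [B [p [q [_ [Hp Hq]]]]].
  destruct (classic (eval v B)) as [H|H].
  - exact (part_holds v _ _ _ _ _ Hp H).
  - exact (part_holds v _ _ _ _ _ Hq H).
Qed.

Lemma nstep1_sound v G G' :
  ontological v -> nstep1 G G' -> eval v G' -> eval v G.
Proof.
  intros [refl [trans sym]] [_ Hs] HG'; apply NNPP; intro HG.
  destruct Hs as [[a [b [[p Hp] [_ ->]]]]
                 |[[a [b [c [p [q [_ [Hp [Hq [_ ->]]]]]]]]]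
                  |[a [b [p [q [_ [Hp [Hq [_ ->]]]]]]]]]];
    simpl in HG'; destruct HG' as [HG'|HG']; try contradiction; apply HG'.
  - exact (refl a b (neg_part_true v _ _ _ HG Hp)).
  - exact (trans a b c (neg_part_true v _ _ _ HG Hp) (neg_part_true v _ _ _ HG Hq)).
  - exact (sym a b (neg_part_true v _ _ _ HG Hp) (neg_part_true v _ _ _ HG Hq)).
Qed.

Lemma nstep2_sound v G G1 G2 :
  nstep2 G G1 G2 -> eval v G1 -> eval v G2 -> eval v G.
Proof.
  intros [_ [B [C [[p Hp] [_ [_ [-> ->]]]]]]] H1 H2; apply NNPP; intro HG.
  simpl in H1, H2; destruct H1 as [H1|H1]; try contradiction.
  destruct H2 as [H2|H2]; try contradiction.
  destruct (neg_part_true v _ _ _ HG Hp); contradiction.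
Qed.

Lemma closed_tab_valid v t :
  ontological v -> normal_tab t -> closed_tab t -> eval v (root t).
Proof.
  intros Hv; induction t as [F|F t1 IH|F t1 IH1 t2 IH2]; simpl; intros Hn Hc.
  - apply closed_form_valid, Hc; simpl; auto.
  - destruct Hn as [Hs Hn]; exact (nstep1_sound v _ _ Hv Hs (IH Hn Hc)).
  - destruct Hn as [Hs [Hn1 Hn2]]; apply (nstep2_sound v _ _ _ Hs).
    + apply IH1; auto; intros G HG; apply Hc, in_or_app; auto.
    + apply IH2; auto; intros G HG; apply Hc, in_or_app; auto.
Qed.

Definition extends (G G' : formula) : Prop := exists X, G' = Or G X.

Lemma nstep1_extends G G' : nstep1 G G' -> extends G G'.
Proof.
  intros [_ [[a [b [_ [_ ->]]]]|[[a [b [c [p [q [_ [_ [_ [_ ->]]]]]]]]]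
                                |[a [b [p [q [_ [_ [_ [_ ->]]]]]]]]]]];
    eexists; reflexivity.
Qed.

Lemma nstep2_extends G G1 G2 : nstep2 G G1 G2 -> extends G G1 /\ extends G G2.
Proof.
  intros [_ [B [C [_ [_ [_ [-> ->]]]]]]]; split; eexists; reflexivity.
Qed.

Lemma extends_false v G G' : extends G G' -> ~ eval v G' -> ~ eval v G.
Proof. intros [X ->]; simpl; tauto. Qed.

Lemma leaf_false_root_false v t H :
  normal_tab t -> In H (leaves t) -> ~ eval v H -> ~ eval v (root t).
Proof.
  induction t as [F|F t1 IH|F t1 IH1 t2 IH2]; simpl; intros Hn Hi HH.
  - destruct Hi as [<-|[]]; exact HH.
  - destruct Hn as [Hs Hn]; exact (extends_false v _ _ (nstep1_extends _ _ Hs) (IH Hn Hi HH)).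
  - destruct Hn as [Hs [Hn1 Hn2]]; destruct (nstep2_extends _ _ _ Hs) as [E1 E2].
    destruct (in_app_or _ _ _ Hi) as [Hi'|Hi'].
    + exact (extends_false v _ _ E1 (IH1 Hn1 Hi' HH)).
    + exact (extends_false v _ _ E2 (IH2 Hn2 Hi' HH)).
Qed.

Lemma part_app s0 A p s X r s' Y :
  part s0 A p s X -> part s X r s' Y -> part s0 A (p ++ r) s' Y.
Proof. intros Hp; revert r s' Y; induction Hp; simpl; intros; auto; constructor; auto. Qed.

Lemma part_split p : forall s0 A r s' Y s X,
  part s0 A (p ++ r) s' Y -> part s0 A p s X -> part s X r s' Y.
Proof.
  induction p as [|d p IH]; simpl; intros s0 A r s' Y s X H1 H2.
  - inversion H2; subst; auto.
  - inversion H2; subst; inversion H1; subst; eauto.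
Qed.

Fixpoint size (F : formula) : nat :=
  match F with
  | Eps _ _ => 1
  | Or B C => S (size B + size C)
  | Neg B => S (size B)
  end.

Lemma part_size s X r s' Y : part s X r s' Y -> size Y + length r <= size X.
Proof. intros Hp; induction Hp; simpl; lia. Qed.

Lemma part_self s X r s' : part s X r s' X -> r = [] /\ s = s'.
Proof.
  intros Hp; destruct r.
  - inversion Hp; auto.
  - apply part_size in Hp; simpl in Hp; lia.
Qed.

Lemma nested_same_polarity s0 A p q s s' X :
  part s0 A p s X -> part s0 A q s' X -> prefix p q -> s = s'.
Proof.
  intros H1 H2 [r ->]; exact (proj2 (part_self _ _ _ _ (part_split _ _ _ _ _ _ _ _ H2 H1))).
Qed.

Lemma open_no_pos_neg F p q X :
  ~ closed_form F -> pos_part_at F p X -> neg_part_at F q X -> False.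
Proof.
  intros Hc Hp Hq; apply Hc; exists X, p, q; repeat split; auto; intro Hpre.
  - discriminate (nested_same_polarity _ _ _ _ _ _ _ Hp Hq Hpre).
  - discriminate (nested_same_polarity _ _ _ _ _ _ _ Hq Hp Hpre).
Qed.

Lemma overlapping_atoms F p q a b c d :
  neg_part_at F p (Eps a b) -> neg_part_at F q (Eps c d) -> ~ nonoverlap p q ->
  a = c /\ b = d.
Proof.
  intros Hp Hq Hn.
  assert (Hpre : prefix p q \/ prefix q p)
    by (unfold nonoverlap in Hn; tauto).
  destruct Hpre as [[r ->]|[r ->]].
  - pose proof (part_split _ _ _ _ _ _ _ _ Hq Hp) as K; inversion K; auto.
  - pose proof (part_split _ _ _ _ _ _ _ _ Hp Hq) as K; inversion K; auto.
Qed.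

Definition neg_valuation (H : formula) : nat -> nat -> Prop :=
  fun a b => neg_part H (Eps a b).

Lemma hintikka_ontological H : hintikka H -> ontological (neg_valuation H).
Proof. intros [_ [_ [h3 [h4 h5]]]]; repeat split; unfold neg_valuation; eauto. Qed.

Lemma hintikka_parts H : hintikka H ->
  forall X p s, part true H p s X -> holds (negb s) (neg_valuation H) X.
Proof.
  intros [Hc [Hor _]].
  assert (Hext : forall p s X d s' Y, part true H p s X -> part s X [d] s' Y ->
                 part true H (p ++ [d]) s' Y) by (intros; eapply part_app; eauto).
  unfold holds; induction X as [a b|B IHB C IHC|B IHB]; intros p s Hp;
    destruct s; simpl.
  - intros [q Hq]; exact (open_no_pos_neg _ _ _ _ Hc Hp Hq).
  - exists p; exact Hp.
  - intros [HB|HC].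
    + apply (IHB (p ++ [DL]) true); auto; apply (Hext _ _ _ _ _ _ Hp); repeat constructor.
    + apply (IHC (p ++ [DR]) true); auto; apply (Hext _ _ _ _ _ _ Hp); repeat constructor.
  - destruct (Hor B C (ex_intro _ p Hp)) as [[q Hq]|[q Hq]].
    + left; exact (IHB q false Hq).
    + right; exact (IHC q false Hq).
  - intro N; apply N, (IHB (p ++ [DN]) false); apply (Hext _ _ _ _ _ _ Hp); repeat constructor.
  - apply (IHB (p ++ [DN]) true); apply (Hext _ _ _ _ _ _ Hp); repeat constructor.
Qed.

Lemma hintikka_falsifiable H :
  hintikka H -> exists v, ontological v /\ ~ eval v H.
Proof.
  intros Hh; exists (neg_valuation H); split.
  - exact (hintikka_ontological H Hh).
  - exact (hintikka_parts H Hh H [] true (part_here _ _)).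
Qed.

Lemma irreducible_hintikka F :
  ~ closed_form F -> ~ (exists G', nstep1 F G') -> ~ (exists G1 G2, nstep2 F G1 G2) ->
  hintikka F.
Proof.
  intros Hc N1 N2; split; [exact Hc|].
  split; [|split; [|split]].
  - intros B C HBC; apply NNPP; intro K; apply N2.
    exists (Or F (Neg B)), (Or F (Neg C)); split; auto.
    exists B, C; repeat split; auto; intro; apply K; auto.
  - intros a b Hab; apply NNPP; intro K; apply N1.
    eexists; split; auto; left; exists a, b; eauto.
  - intros a b c [p Hp] [q Hq]; apply NNPP; intro K.
    destruct (classic (nonoverlap p q)) as [No|No].
    + apply N1; eexists; split; auto; right; left.
      exists a, b, c, p, q; repeat (split; [eassumption|]); reflexivity.
    + destruct (overlapping_atoms _ _ _ _ _ _ _ Hp Hq No); subst.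
      apply K; exists q; exact Hq.
  - intros a b [p Hp] [q Hq]; apply NNPP; intro K.
    destruct (classic (nonoverlap p q)) as [No|No].
    + apply N1; eexists; split; auto; right; right.
      exists a, b, p, q; repeat (split; [eassumption|]); reflexivity.
    + destruct (overlapping_atoms _ _ _ _ _ _ _ Hp Hq No); subst.
      apply K; exists p; exact Hp.
Qed.

Theorem theorem6p6 (A : formula) :
  (exists t, normal_tableau_for A t /\ closed_tab t) ->
  (forall t, normal_tableau_for A t -> forall H, In H (leaves t) -> ~ hintikka H) /\
  (forall t, normal_tableau_for A t -> completed t -> closed_tab t).
Proof.
  intros [t0 [[R0 N0] C0]].
  assert (No_hintikka :
            forall t, normal_tableau_for A t -> forall H, In H (leaves t) -> ~ hintikka H).
  { intros t [Rt Nt] H Hi Hh.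
    destruct (hintikka_falsifiable H Hh) as [v [Hv HH]].
    apply (leaf_false_root_false v t H Nt Hi HH).
    rewrite Rt, <- R0; exact (closed_tab_valid v t0 Hv N0 C0). }
  split; [exact No_hintikka|].
  intros t Ht Hcomp F Hi; apply NNPP; intro Hc.
  destruct (Hcomp F Hi) as [N1 N2].
  exact (No_hintikka t Ht F Hi (irreducible_hintikka F Hc N1 N2)).
Qed.
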